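(* Let Assumption 1 hold and suppose $n_k\ge N-1$ for some $k\in[L-1]$. Then every non-degenerate local minimum $(W^*_l,b^*_l)_{l=1}^L$ of $\Phi$ (i.e. the full Hessian of $\Phi$ there is non-singular) for which $\operatorname{rank}(W^*_l)=n_l$ for all $l\in[k+2,L]$ is a global minimum of $\Phi$.
   Context: Training data: $X=[x_1,\dots,x_N]^T\in\mathbb{R}^{N\times d}$, $Y=[y_1,\dots,y_N]^T\in\mathbb{R}^{N\times m}$ with entries $y_{ij}$. A fully connected network with layers $0,\dots,L$ has widths $n_0=d,n_1,\dots,n_{L-1},n_L=m$, weights $W_k\in\mathbb{R}^{n_{k-1}\times n_k}$ and biases $b_k\in\mathbb{R}^{n_k}$; $\mathcal{P}$ is the space of all parameters. With $\sigma$ applied componentwise, $f_0(x)=x$, $g_k(x)=W_k^Tf_{k-1}(x)+b_k$, $f_k(x)=\sigma(g_k(x))$. The objective is $\Phi((W_k,b_k)_{k=1}^L)=\sum_{i=1}^N\sum_{j=1}^m l(f_{Lj}(x_i)-y_{ij})$, whose minimum over $\mathcal{P}$ is assumed attained. $[a]=\{1,\dots,a\}$, $[a,b]$ the integers from $a$ to $b$. Assumption 1: (1) $x_i\neq x_j$ for $i\ne j$; (2) $\sigma$ is real analytic on $\mathbb{R}$ with $\sigma'(t)>0$ for all $t$, and either $\sigma$ is bounded or there are positive $\rho_1,\dots,\rho_4$ with $|\sigma(t)|\le\rho_1e^{\rho_2t}$ for $t<0$ and $|\sigma(t)|\le\rho_3t+\rho_4$ for $t\ge0$; (3) $l\in C^2(\mathbb{R})$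 and whenever $l'(a)=0$, $a$ is a global minimizer of $l$. *)

From Stdlib Require Import Reals Lra Lia List.
Import ListNotations.
Open Scope R_scope.

Fixpoint rsum (n : nat) (F : nat -> R) : R :=
  match n with
  | O => 0
  | S k => rsum k F + F k
  end.

Definition lsum {A : Type} (F : A -> R) (l : list A) : R :=
  fold_right (fun a acc => F a + acc) 0 l.

(* IW k i j : entry (i,j) of W_k  (i < n_{k-1}, j < n_k), indices 0-based;
   IB k j   : entry j of b_k     (j < n_k);   layers k = 1..L. *)
Inductive pidx : Type :=
| IW (k i j : nat)
| IB (k j : nat).

Definition pidx_eq_dec (p q : pidx) : {p = q} + {p <> q}.
Proof. decide equality; apply Nat.eq_dec. Defined.

(* A point of the parameter space P: only the coordinates in [pidxs n L] matter. *)
Definition params := pidx -> R.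

Definition pidxs (n : nat -> nat) (L : nat) : list pidx :=
  flat_map (fun k =>
     flat_map (fun i => map (fun j => IW k i j) (seq 0 (n k))) (seq 0 (n (k - 1)%nat))
     ++ map (fun j => IB k j) (seq 0 (n k)))
   (seq 1 L).

Definition upd (th : params) (p : pidx) (t : R) : params :=
  fun q => if pidx_eq_dec q p then t else th q.

(* f_k(x) (componentwise), f_0(x) = x,
   g_k(x)_j = sum_{i < n_{k-1}} (W_k)_{ij} f_{k-1}(x)_i + (b_k)_j,  f_k = sigma o g_k *)
Fixpoint fk (sigma : R -> R) (n : nat -> nat) (th : params) (k : nat)
         (x : nat -> R) : nat -> R :=
  match k with
  | O => x
  | S k' => fun j =>
      sigma (rsum (n k') (fun i => th (IW (S k') i j) * fk sigma n th k' x i)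
             + th (IB (S k') j))
  end.

(* Data: X i = x_{i+1} (a vector of length d = n 0), Y i j = y_{i+1,j+1}, i < N, j < m = n L. *)
Definition Phi (sigma l : R -> R) (n : nat -> nat) (L N : nat)
           (X : nat -> nat -> R) (Y : nat -> nat -> R) (th : params) : R :=
  rsum N (fun i => rsum (n L) (fun j => l (fk sigma n th L (X i) j - Y i j))).

Definition distinct_data (N d : nat) (X : nat -> nat -> R) : Prop :=
  forall i j, (i < N)%nat -> (j < N)%nat -> i <> j ->
    exists c, (c < d)%nat /\ X i c <> X j c.

Definition real_analytic (f : R -> R) : Prop :=
  forall x0, exists (a : nat -> R) (r : R), 0 < r /\
    forall x, Rabs (x - x0) < r ->
      infinite_sum (fun k => a k * (x - x0) ^ k) (f x).

Definition sigma_assumption (sigma : R -> R) : Prop :=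
  real_analytic sigma /\
  (forall t, exists s, derivable_pt_lim sigma t s /\ 0 < s) /\
  ((exists M, forall t, Rabs (sigma t) <= M) \/
   (exists r1 r2 r3 r4, 0 < r1 /\ 0 < r2 /\ 0 < r3 /\ 0 < r4 /\
      (forall t, t < 0 -> Rabs (sigma t) <= r1 * exp (r2 * t)) /\
      (forall t, 0 <= t -> Rabs (sigma t) <= r3 * t + r4))).

Definition C2 (f : R -> R) : Prop :=
  exists f1 f2 : R -> R,
    (forall x, derivable_pt_lim f x (f1 x)) /\
    (forall x, derivable_pt_lim f1 x (f2 x)) /\
    continuity f2.

Definition loss_assumption (l : R -> R) : Prop :=
  C2 l /\
  forall a, derivable_pt_lim l a 0 -> forall t, l a <= l t.

Definition is_gradient (ps : list pidx) (F : params -> R) (G : pidx -> params -> R) : Prop :=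
  forall th p, In p ps -> derivable_pt_lim (fun t => F (upd th p t)) (th p) (G p th).

Definition is_hessian_at (ps : list pidx) (G : pidx -> params -> R) (th : params)
           (H : pidx -> pidx -> R) : Prop :=
  forall p q, In p ps -> In q ps ->
    derivable_pt_lim (fun t => G p (upd th q t)) (th q) (H p q).

Definition nonsingular (ps : list pidx) (H : pidx -> pidx -> R) : Prop :=
  forall v : pidx -> R,
    (forall p, In p ps -> lsum (fun q => H p q * v q) ps = 0) ->
    forall q, In q ps -> v q = 0.

Definition local_min (ps : list pidx) (F : params -> R) (th0 : params) : Prop :=
  exists eps, 0 < eps /\
    forall th, (forall p, In p ps -> Rabs (th p - th0 p) < eps) -> F th0 <= F th.

Definition global_min (F : params -> R) (th0 : params) : Prop :=
  forall th, F th0 <= F th.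

Definition nondeg_local_min (ps : list pidx) (F : params -> R) (th0 : params) : Prop :=
  local_min ps F th0 /\
  exists G H, is_gradient ps F G /\ is_hessian_at ps G th0 H /\ nonsingular ps H.

Definition lin_indep_cols (A : nat -> nat -> R) (p : nat) (cs : list nat) : Prop :=
  forall c : nat -> R,
    (forall i, (i < p)%nat -> lsum (fun j => c j * A i j) cs = 0) ->
    forall j, In j cs -> c j = 0.

Definition has_rank (A : nat -> nat -> R) (p q r : nat) : Prop :=
  (exists cs, NoDup cs /\ (forall j, In j cs -> (j < q)%nat) /\
              length cs = r /\ lin_indep_cols A p cs) /\
  (forall cs, NoDup cs -> (forall j, In j cs -> (j < q)%nat) ->
              length cs = S r -> ~ lin_indep_cols A p cs).

Definition Wmat (th : params) (k : nat) : nat -> nat -> R :=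
  fun i j => th (IW k i j).

(* Let delta_i be the derivative of the loss
   of sample i with respect to the pre-activation of layer k+1.  Stationarity in W_{k+1} and
   b_{k+1} says that every column (delta_ij)_i of R^N is orthogonal to the n_k + 1 >= N columns
   of the matrix [f_k(x_i), 1]_i.  If one of these columns of delta were non-zero, the columns
   of [f_k(x_i), 1] would be linearly dependent, and moving column j of (W_{k+1}, b_{k+1})
   along a dependency would leave every pre-activation, hence Phi, unchanged.  The positive
   semidefinite Hessian then annihilates this direction, contradicting non-singularity.  So
   delta = 0.  As sigma' > 0 and W_{k+2}, ..., W_L have full column rank, this propagates
   forward to l'(f_L(x_i)_j - y_ij) = 0, so every term of Phi sits at a global minimizer of l. *)

From Stdlib Require Import Reals Lra Lia List Permutation Classical ClassicalEpsilon
  FunctionalExtensionality.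
From Coquelicot Require Import Coquelicot.
Open Scope R_scope.

Lemma derivable_pt_lim_at_0 (f : R -> R) (x d : R) :
  derivable_pt_lim f x d <-> derivable_pt_lim (fun h => f (x + h)) 0 d.
Proof.
  split; intros H eps Heps; destruct (H eps Heps) as [del Hdel]; exists del;
    intros h Hh0 Hh; specialize (Hdel h Hh0 Hh).
  - now rewrite Rplus_0_l, Rplus_0_r.
  - now rewrite Rplus_0_l, Rplus_0_r in Hdel.
Qed.

Lemma derivable_pt_lim_val (f : R -> R) (x d d' : R) :
  derivable_pt_lim f x d -> d = d' -> derivable_pt_lim f x d'.
Proof. now intros H <-. Qed.

Lemma derivable_pt_lim_affine (a b x : R) : derivable_pt_lim (fun t => a + t * b) x b.
Proof.
  eapply derivable_pt_lim_val.
  - apply derivable_pt_lim_plus; [apply derivable_pt_lim_const|].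
    apply derivable_pt_lim_mult; [apply derivable_pt_lim_id|apply derivable_pt_lim_const].
  - cbv beta. ring.
Qed.

Lemma derivable_pt_lim_factor_pos (f : R -> R) (d s : R) :
  derivable_pt_lim f 0 0 -> derivable_pt_lim f 0 (d * s) -> 0 < s -> d = 0.
Proof.
  intros H0 Hds Hs. pose proof (uniqueness_limite _ _ _ _ H0 Hds) as E.
  symmetry in E. apply Rmult_integral in E. destruct E; [assumption|lra].
Qed.

Lemma real_analytic_deriv_derivable (f f1 : R -> R) :
  real_analytic f -> (forall x, derivable_pt_lim f x (f1 x)) ->
  forall x0, exists s, derivable_pt_lim f1 x0 s.
Proof.
  intros Ha Hd x0. destruct (Ha x0) as [a [r [Hr Hs]]].
  set (y := r / 2).
  assert (Hy : 0 < y) by (unfold y; lra).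
  assert (Hseries : forall h, Rabs h < r -> is_pseries a h (f (x0 + h))).
  { intros h Hh. apply is_pseries_R, is_series_Reals.
    specialize (Hs (x0 + h)). replace (x0 + h - x0) with h in Hs by ring. now apply Hs. }
  assert (Hrad : forall h, Rabs h < y -> Rbar_lt (Rabs h) (CV_radius a)).
  { assert (Hy_rad : Rbar_le y (CV_radius a)).
    { apply (proj1 (CV_radius_bounded a)).
      assert (Hcv : Un_cv (fun k => a k * y ^ k) 0).
      { apply is_lim_seq_Reals, ex_series_lim_0.
        exists (f (x0 + y)). apply is_pseries_R, Hseries.
        rewrite Rabs_right; unfold y; lra. }
      destruct (maj_by_pos _ (exist _ 0 Hcv)) as [M [_ HM]]. now exists M. }
    intros h Hh. destruct (CV_radius a) as [c| |]; simpl in *; try tauto; lra. }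
  assert (Hf : forall h, Rabs h < y -> f (x0 + h) = PSeries a h).
  { intros h Hh. symmetry. apply is_pseries_unique, Hseries. unfold y in Hh. lra. }
  assert (Hf1 : forall h, Rabs h < y -> f1 (x0 + h) = PSeries (PS_derive a) h).
  { intros h Hh.
    assert (D1 : derivable_pt_lim (fun z => f (x0 + z)) h (f1 (x0 + h))).
    { apply (proj2 (derivable_pt_lim_at_0 _ _ _)).
      apply (derivable_pt_lim_ext (fun z => f ((x0 + h) + z))); [intros; f_equal; ring|].
      apply (proj1 (derivable_pt_lim_at_0 _ _ _)), Hd. }
    assert (D2 : is_derive (fun z => f (x0 + z)) h (PSeries (PS_derive a) h)).
    { eapply is_derive_ext_loc; [|apply is_derive_PSeries, Hrad, Hh].
      assert (Hp : 0 < y - Rabs h) by lra.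
      exists (mkposreal _ Hp). intros z Hz. change R in z. change (Rabs (z - h) < y - Rabs h) in Hz.
      symmetry. apply Hf.
      pose proof (Rabs_triang (z - h) h). replace (z - h + h) with z in * by ring. lra. }
    apply is_derive_Reals in D2. eapply uniqueness_limite; eauto. }
  exists (PSeries (PS_derive (PS_derive a)) 0).
  apply (proj2 (derivable_pt_lim_at_0 _ _ _)), is_derive_Reals.
  eapply is_derive_ext_loc; [|apply is_derive_PSeries].
  - exists (mkposreal _ Hy). intros z Hz. change R in z. change (Rabs (z - 0) < y) in Hz.
    rewrite Rminus_0_r in Hz. symmetry. now apply Hf1.
  - rewrite CV_radius_derive. apply Hrad. rewrite Rabs_R0. exact Hy.
Qed.

Lemma local_min_deriv_zero (h : R -> R) (eps d : R) : 0 < eps ->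
  (forall t, Rabs t < eps -> h 0 <= h t) -> derivable_pt_lim h 0 d -> d = 0.
Proof.
  intros Heps Hmin Hd.
  rewrite <- (derive_pt_eq_0 h 0 d (exist _ d Hd) Hd).
  apply (deriv_minimum h (- eps) eps); try lra.
  intros t Ht1 Ht2. apply Hmin, Rabs_def1; lra.
Qed.

Lemma local_min_second_deriv_nonneg (h h1 : R -> R) (eps q : R) : 0 < eps ->
  (forall t, Rabs t < eps -> h 0 <= h t) -> (forall t, derivable_pt_lim h t (h1 t)) ->
  derivable_pt_lim h1 0 q -> 0 <= q.
Proof.
  intros Heps Hmin Hd Hq. apply Rnot_lt_le. intros Hneg.
  assert (H10 : h1 0 = 0) by exact (local_min_deriv_zero h eps _ Heps Hmin (Hd 0)).
  destruct (Hq (- q / 2) ltac:(lra)) as [del Hdel].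
  pose proof (cond_pos del). pose proof (Rmin_l del eps). pose proof (Rmin_r del eps).
  set (s := Rmin del eps / 2).
  assert (Hs : 0 < s < Rmin del eps) by (unfold s; assert (0 < Rmin del eps)
    by (apply Rmin_glb_lt; lra); lra).
  (* by the mean value theorem h s - h 0 = h1 c * s, and h1 c < 0 since h1 c / c is near q *)
  destruct (MVT_cor2 h h1 0 s ltac:(lra) (fun c _ => Hd c)) as [c [Hmvt Hc]].
  assert (Hc_abs : Rabs c < del) by (rewrite Rabs_right; lra).
  specialize (Hdel c ltac:(lra) Hc_abs).
  rewrite Rplus_0_l, H10, Rminus_0_r in Hdel. apply Rabs_def2 in Hdel.
  assert (Hh1c : h1 c = (h1 c / c) * c) by (field; lra).
  assert (h1 c < 0) by nra.
  assert (h s < h 0) by nra.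
  specialize (Hmin s ltac:(rewrite Rabs_right; lra)). lra.
Qed.

Lemma quadratic_nonneg_linear_coef_zero (a b : R) :
  (forall s, 0 <= 2 * s * b + s * s * a) -> b = 0.
Proof.
  intros H. destruct (Req_dec b 0) as [|Hb]; [assumption|exfalso].
  set (t := / (Rabs a + 1)).
  assert (Ht : 0 < t) by (apply Rinv_0_lt_compat; pose proof (Rabs_pos a); lra).
  assert (Hta : t * a < 1).
  { apply (Rmult_lt_reg_r (Rabs a + 1)); [pose proof (Rabs_pos a); lra|].
    replace (t * a * (Rabs a + 1)) with a by (unfold t; field; pose proof (Rabs_pos a); lra).
    pose proof (Rle_abs a). lra. }
  specialize (H (- (t * b))).
  replace (2 * - (t * b) * b + - (t * b) * - (t * b) * a) with ((t * (b * b)) * (t * a - 2))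
    in H by ring.
  assert (0 < t * (b * b)) by (apply Rmult_lt_0_compat; [exact Ht|apply Rsqr_pos_lt, Hb]).
  nra.
Qed.

(** * Second directional derivatives *)

Definition vshift {I : Type} (th : I -> R) (t : R) (u : I -> R) : I -> R :=
  fun r => th r + t * u r.

Definition vcomb {I : Type} (a : R) (u : I -> R) (b : R) (w : I -> R) : I -> R :=
  fun r => a * u r + b * w r.

Lemma vshift0 {I : Type} (th u : I -> R) : vshift th 0 u = th.
Proof. extensionality r. unfold vshift. ring. Qed.

Lemma vshift_vshift {I : Type} (th u : I -> R) (t s : R) :
  vshift (vshift th t u) s u = vshift th (t + s) u.
Proof. extensionality r. unfold vshift. ring. Qed.

Record dir_derivs2 {I : Type} (F : (I -> R) -> R) (D1 : (I -> R) -> (I -> R) -> R)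
    (D2 : (I -> R) -> (I -> R) -> (I -> R) -> R) : Prop := {
  dd1_spec : forall th u, derivable_pt_lim (fun t => F (vshift th t u)) 0 (D1 th u);
  dd2_spec : forall th u w, derivable_pt_lim (fun t => D1 (vshift th t w) u) 0 (D2 th u w);
  dd1_linear : forall th u w a b, D1 th (vcomb a u b w) = a * D1 th u + b * D1 th w;
  dd2_linear : forall th u w v a b, D2 th (vcomb a u b w) v = a * D2 th u v + b * D2 th w v;
  dd2_sym : forall th u w, D2 th u w = D2 th w u }.

(* In [Type], so that the derivatives of a family of functions can be projected out. *)
Definition smooth2 {I : Type} (F : (I -> R) -> R) : Type :=
  { D1 : (I -> R) -> (I -> R) -> R &
    { D2 : (I -> R) -> (I -> R) -> (I -> R) -> R | dir_derivs2 F D1 D2 } }.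

Lemma smooth2_const {I : Type} (c : R) : smooth2 (fun _ : I -> R => c).
Proof.
  exists (fun _ _ => 0), (fun _ _ _ => 0).
  constructor; intros; try ring; apply derivable_pt_lim_const.
Qed.

Lemma smooth2_coord {I : Type} (r : I) : smooth2 (fun th : I -> R => th r).
Proof.
  exists (fun _ u => u r), (fun _ _ _ => 0).
  constructor; intros; unfold vcomb; try ring.
  - apply derivable_pt_lim_affine.
  - apply derivable_pt_lim_const.
Qed.

Lemma smooth2_plus {I : Type} (F G : (I -> R) -> R) :
  smooth2 F -> smooth2 G -> smooth2 (fun th => F th + G th).
Proof.
  intros [D1 [D2 HF]] [E1 [E2 HG]].
  exists (fun th u => D1 th u + E1 th u), (fun th u w => D2 th u w + E2 th u w).
  constructor; intros.
  - apply derivable_pt_lim_plus; [apply HF|apply HG].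
  - apply derivable_pt_lim_plus; [apply HF|apply HG].
  - rewrite (dd1_linear _ _ _ HF), (dd1_linear _ _ _ HG). ring.
  - rewrite (dd2_linear _ _ _ HF), (dd2_linear _ _ _ HG). ring.
  - now rewrite (dd2_sym _ _ _ HF), (dd2_sym _ _ _ HG).
Qed.

Lemma smooth2_mult {I : Type} (F G : (I -> R) -> R) :
  smooth2 F -> smooth2 G -> smooth2 (fun th => F th * G th).
Proof.
  intros [D1 [D2 HF]] [E1 [E2 HG]].
  exists (fun th u => F th * E1 th u + G th * D1 th u),
    (fun th u w => D1 th w * E1 th u + F th * E2 th u w + E1 th w * D1 th u + G th * D2 th u w).
  constructor; intros.
  - eapply derivable_pt_lim_val;
      [apply derivable_pt_lim_mult; [apply HF|apply HG]|].
    cbv beta. rewrite vshift0. ring.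
  - eapply derivable_pt_lim_val.
    + apply derivable_pt_lim_plus; apply derivable_pt_lim_mult;
        [apply HF|apply HG|apply HG|apply HF].
    + cbv beta. rewrite !vshift0. ring.
  - rewrite (dd1_linear _ _ _ HF), (dd1_linear _ _ _ HG). ring.
  - rewrite (dd1_linear _ _ _ HF), (dd1_linear _ _ _ HG),
      (dd2_linear _ _ _ HF), (dd2_linear _ _ _ HG). ring.
  - rewrite (dd2_sym _ _ _ HF), (dd2_sym _ _ _ HG). ring.
Qed.

Lemma smooth2_comp {I : Type} (g g1 g2 : R -> R) (F : (I -> R) -> R) :
  (forall x, derivable_pt_lim g x (g1 x)) -> (forall x, derivable_pt_lim g1 x (g2 x)) ->
  smooth2 F -> smooth2 (fun th => g (F th)).
Proof.
  intros Hg Hg1 [D1 [D2 HF]].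
  exists (fun th u => g1 (F th) * D1 th u),
    (fun th u w => g2 (F th) * D1 th w * D1 th u + g1 (F th) * D2 th u w).
  constructor; intros.
  - eapply derivable_pt_lim_val;
      [apply (derivable_pt_lim_comp (fun t => F (vshift th t u)) g); [apply HF|apply Hg]|].
    rewrite vshift0. ring.
  - eapply derivable_pt_lim_val.
    + apply derivable_pt_lim_mult; [|apply HF].
      apply (derivable_pt_lim_comp (fun t => F (vshift th t w)) g1); [apply HF|apply Hg1].
    + cbv beta. rewrite !vshift0. ring.
  - rewrite (dd1_linear _ _ _ HF). ring.
  - rewrite (dd1_linear _ _ _ HF), (dd2_linear _ _ _ HF). ring.
  - rewrite (dd2_sym _ _ _ HF). ring.
Qed.

Lemma smooth2_rsum {I : Type} (m : nat) (F : nat -> (I -> R) -> R) :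
  (forall i, smooth2 (F i)) -> smooth2 (fun th => rsum m (fun i => F i th)).
Proof.
  intros HF. induction m as [|m IH]; simpl.
  - apply smooth2_const.
  - exact (smooth2_plus _ _ IH (HF m)).
Qed.

Definition local_min_along {I : Type} (F : (I -> R) -> R) (th u : I -> R) : Prop :=
  exists eps, 0 < eps /\ forall t, Rabs t < eps -> F th <= F (vshift th t u).

Section DirectionalDerivatives.
Context {I : Type} (F : (I -> R) -> R) (D1 : (I -> R) -> (I -> R) -> R)
  (D2 : (I -> R) -> (I -> R) -> (I -> R) -> R) (HS : dir_derivs2 F D1 D2).

Lemma dd1_along (th u : I -> R) (t0 : R) :
  derivable_pt_lim (fun t => F (vshift th t u)) t0 (D1 (vshift th t0 u) u).
Proof.
  apply (proj2 (derivable_pt_lim_at_0 _ _ _)).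
  eapply derivable_pt_lim_ext; [|apply (dd1_spec _ _ _ HS (vshift th t0 u) u)].
  intros t. cbv beta. now rewrite vshift_vshift.
Qed.

Lemma dd1_at (th u : I -> R) (c : R) :
  derivable_pt_lim (fun t => F (vshift th (t - c) u)) c (D1 th u).
Proof.
  apply (proj2 (derivable_pt_lim_at_0 _ _ _)).
  eapply derivable_pt_lim_ext; [|apply (dd1_spec _ _ _ HS th u)].
  intros h. cbv beta. do 2 f_equal. ring.
Qed.

Lemma dd2_at (th u w : I -> R) (c : R) :
  derivable_pt_lim (fun t => D1 (vshift th (t - c) w) u) c (D2 th u w).
Proof.
  apply (proj2 (derivable_pt_lim_at_0 _ _ _)).
  eapply derivable_pt_lim_ext; [|apply (dd2_spec _ _ _ HS th u w)].
  intros h. cbv beta. do 2 f_equal. ring.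
Qed.

Lemma dd1_chain (th u : I -> R) (g : R -> R) (s : R) :
  derivable_pt_lim g 0 s -> g 0 = 0 ->
  derivable_pt_lim (fun t => F (vshift th (g t) u)) 0 (D1 th u * s).
Proof.
  intros Hg Hg0.
  apply (derivable_pt_lim_comp g (fun t => F (vshift th t u))); [exact Hg|].
  rewrite Hg0. apply HS.
Qed.

Lemma dd1_scale (th : I -> R) (c : R) (u : I -> R) : D1 th (fun r => c * u r) = c * D1 th u.
Proof.
  replace (fun r => c * u r) with (vcomb c u 0 u) by (extensionality r; unfold vcomb; ring).
  rewrite (dd1_linear _ _ _ HS). ring.
Qed.

Lemma dd1_rsum (th : I -> R) (m : nat) (c : nat -> R) (e : nat -> I -> R) :
  D1 th (fun x => rsum m (fun j => c j * e j x)) = rsum m (fun j => c j * D1 th (e j)).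
Proof.
  induction m as [|m IH]; simpl.
  - replace (fun _ : I => 0) with (fun r : I => 0 * (fun _ : I => 0) r)
      by (extensionality r; ring).
    rewrite dd1_scale. ring.
  - rewrite <- IH.
    match goal with |- D1 th ?w = _ =>
      replace w with (vcomb 1 (fun x => rsum m (fun j => c j * e j x)) (c m) (e m))
        by (extensionality r; unfold vcomb; ring) end.
    rewrite (dd1_linear _ _ _ HS). ring.
Qed.

Lemma dd2_lin_r (th u : I -> R) (a : R) (x : I -> R) (b : R) (y : I -> R) :
  D2 th u (vcomb a x b y) = a * D2 th u x + b * D2 th u y.
Proof.
  rewrite (dd2_sym _ _ _ HS), (dd2_linear _ _ _ HS), (dd2_sym _ _ _ HS th x),
    (dd2_sym _ _ _ HS th y).
  reflexivity.
Qed.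

Lemma dd2_lsum {A : Type} (th u : I -> R) (e : A -> I -> R) (v : A -> R) (ls : list A) :
  lsum (fun q => D2 th u (e q) * v q) ls = D2 th u (fun r => lsum (fun q => v q * e q r) ls).
Proof.
  induction ls as [|a ls IH]; unfold lsum in *; simpl.
  - replace (fun _ : I => 0) with (vcomb 0 u 0 u) by (extensionality r; unfold vcomb; ring).
    rewrite dd2_lin_r. ring.
  - rewrite IH.
    match goal with |- _ = D2 th u ?w =>
      replace w with (vcomb (v a) (e a) 1
        (fun r => fold_right (fun q acc => v q * e q r + acc) 0 ls))
        by (extensionality r; unfold vcomb; ring) end.
    rewrite dd2_lin_r. ring.
Qed.

Lemma dd2_nonneg_at_min (th u : I -> R) : local_min_along F th u -> 0 <= D2 th u u.
Proof.
  intros [eps [Heps Hmin]].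
  apply (local_min_second_deriv_nonneg (fun t => F (vshift th t u))
           (fun t => D1 (vshift th t u) u) eps); [exact Heps| | |apply HS].
  - intros t Ht. rewrite vshift0. now apply Hmin.
  - intros t. apply dd1_along.
Qed.

Lemma dd2_zero_of_const (th w : I -> R) : (forall t, F (vshift th t w) = F th) -> D2 th w w = 0.
Proof.
  intros Hconst.
  assert (Hd1 : forall t, D1 (vshift th t w) w = 0).
  { intros t. eapply uniqueness_limite; [apply dd1_along|].
    eapply derivable_pt_lim_ext; [|apply (derivable_pt_lim_const (F th))].
    intros s. cbv beta. now rewrite Hconst. }
  eapply uniqueness_limite; [apply HS|].
  eapply derivable_pt_lim_ext; [|apply (derivable_pt_lim_const 0)].
  intros s. cbv beta. now rewrite Hd1.
Qed.

Lemma dd2_cross_zero (th w e : I -> R) :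
  (forall u, 0 <= D2 th u u) -> D2 th w w = 0 -> D2 th e w = 0.
Proof.
  intros Hpsd Hw. apply (quadratic_nonneg_linear_coef_zero (D2 th e e)).
  intros s. specialize (Hpsd (vcomb 1 w s e)).
  rewrite (dd2_linear _ _ _ HS), !dd2_lin_r, Hw, (dd2_sym _ _ _ HS th w e) in Hpsd. lra.
Qed.

End DirectionalDerivatives.

Lemma rsum_ext (m : nat) (f g : nat -> R) :
  (forall a, (a < m)%nat -> f a = g a) -> rsum m f = rsum m g.
Proof.
  induction m as [|m IH]; intros H; simpl; [reflexivity|].
  rewrite IH, H; [reflexivity|lia|intros; apply H; lia].
Qed.

Lemma rsum_plus (m : nat) (f g : nat -> R) : rsum m (fun a => f a + g a) = rsum m f + rsum m g.
Proof. induction m as [|m IH]; simpl; [ring|]. rewrite IH. ring. Qed.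

Lemma rsum_scal (m : nat) (c : R) (f : nat -> R) : rsum m (fun a => c * f a) = c * rsum m f.
Proof. induction m as [|m IH]; simpl; [ring|]. rewrite IH. ring. Qed.

Lemma rsum_zero (m : nat) : rsum m (fun _ => 0) = 0.
Proof. induction m as [|m IH]; simpl; [reflexivity|]. rewrite IH. ring. Qed.

Lemma rsum_update (m j : nat) (f g : nat -> R) : (j < m)%nat ->
  (forall a, (a < m)%nat -> a <> j -> f a = g a) -> rsum m g = rsum m f - f j + g j.
Proof.
  induction m as [|m IH]; intros Hj H; [lia|]. simpl.
  destruct (Nat.eq_dec j m) as [->|Hne].
  - rewrite (rsum_ext m g f) by (intros; symmetry; apply H; lia). ring.
  - rewrite IH, (H m); [ring|lia|lia|lia|intros; apply H; lia].
Qed.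

Lemma rsum_le (m : nat) (f g : nat -> R) :
  (forall a, (a < m)%nat -> f a <= g a) -> rsum m f <= rsum m g.
Proof.
  induction m as [|m IH]; intros H; simpl; [lra|].
  pose proof (H m ltac:(lia)). pose proof (IH ltac:(intros; apply H; lia)). lra.
Qed.

Lemma derivable_pt_lim_rsum (N : nat) (f : nat -> R -> R) (d : nat -> R) (x : R) :
  (forall i, (i < N)%nat -> derivable_pt_lim (f i) x (d i)) ->
  derivable_pt_lim (fun t => rsum N (fun i => f i t)) x (rsum N d).
Proof.
  induction N as [|N IH]; intros H; simpl.
  - apply derivable_pt_lim_const.
  - apply derivable_pt_lim_plus; [apply IH; intros; apply H; lia|apply H; lia].
Qed.

Lemma rsum_swap (m N : nat) (f : nat -> nat -> R) :
  rsum m (fun a => rsum N (fun i => f i a)) = rsum N (fun i => rsum m (fun a => f i a)).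
Proof.
  induction m as [|m IH]; simpl.
  - now rewrite rsum_zero.
  - now rewrite IH, <- rsum_plus.
Qed.

Definition unit_vec (j : nat) : nat -> R := fun a => if Nat.eq_dec a j then 1 else 0.

Lemma unit_vec_sym (a b : nat) : unit_vec a b = unit_vec b a.
Proof. unfold unit_vec. destruct (Nat.eq_dec b a), (Nat.eq_dec a b); congruence. Qed.

Lemma rsum_unit_vec (m j : nat) (f : nat -> R) : (j < m)%nat ->
  rsum m (fun a => unit_vec j a * f a) = f j.
Proof.
  intros Hj. rewrite (rsum_update m j (fun _ => 0)); [|exact Hj|].
  - rewrite rsum_zero. unfold unit_vec. destruct (Nat.eq_dec j j); [ring|congruence].
  - intros a _ Ha. unfold unit_vec. destruct (Nat.eq_dec a j); [congruence|ring].
Qed.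

Lemma lsum_app {A : Type} (F : A -> R) (l1 l2 : list A) :
  lsum F (l1 ++ l2) = lsum F l1 + lsum F l2.
Proof. induction l1 as [|a l1 IH]; unfold lsum in *; simpl; [ring|]. rewrite IH. ring. Qed.

Lemma lsum_perm {A : Type} (F : A -> R) (l1 l2 : list A) :
  Permutation l1 l2 -> lsum F l1 = lsum F l2.
Proof. induction 1; unfold lsum in *; simpl; congruence || ring. Qed.

Lemma lsum_seq (F : nat -> R) (m : nat) : lsum F (seq 0 m) = rsum m F.
Proof.
  induction m as [|m IH]; [reflexivity|].
  rewrite seq_S, lsum_app, IH. unfold lsum. simpl. ring.
Qed.

Lemma lsum_ext {A : Type} (F G : A -> R) (l : list A) :
  (forall a, In a l -> F a = G a) -> lsum F l = lsum G l.
Proof.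
  induction l as [|a l IH]; intros H; unfold lsum in *; simpl; [reflexivity|].
  rewrite (H a (or_introl eq_refl)), IH; [reflexivity|].
  intros; apply H; now right.
Qed.

Lemma lsum_nonneg_le {A : Type} (f : A -> R) (ls : list A) (a : A) :
  (forall x, 0 <= f x) -> In a ls -> f a <= lsum f ls.
Proof.
  intros Hpos. induction ls as [|b ls IH]; simpl; [tauto|]. unfold lsum in *; simpl.
  assert (Hrest : 0 <= fold_right (fun x acc => f x + acc) 0 ls).
  { clear IH. induction ls as [|c ls IH']; simpl; [lra|]. pose proof (Hpos c). lra. }
  intros [->|Hin]; [lra|]. pose proof (IH Hin). pose proof (Hpos b). lra.
Qed.

(** * Linear dependence *)

Definition skip (a0 a : nat) : nat := if Nat.ltb a a0 then a else S a.

Definition unskip (a0 a : nat) : nat := if Nat.ltb a a0 then a else pred a.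

Lemma skip_neq (a0 a : nat) : skip a0 a <> a0.
Proof. unfold skip. destruct (Nat.ltb_spec a a0); lia. Qed.

Lemma skip_lt (a0 a m : nat) : (a < m)%nat -> (skip a0 a < S m)%nat.
Proof. unfold skip. destruct (Nat.ltb_spec a a0); lia. Qed.

Lemma unskip_skip (a0 a : nat) : unskip a0 (skip a0 a) = a.
Proof.
  unfold skip, unskip. destruct (Nat.ltb_spec a a0).
  - destruct (Nat.ltb_spec a a0); lia.
  - destruct (Nat.ltb_spec (S a) a0); lia.
Qed.

Lemma skip_unskip (a0 a : nat) : a <> a0 -> skip a0 (unskip a0 a) = a.
Proof.
  intros Hne. unfold skip, unskip. destruct (Nat.ltb_spec a a0).
  - destruct (Nat.ltb_spec a a0); lia.
  - destruct (Nat.ltb_spec (pred a) a0); lia.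
Qed.

Lemma unskip_lt (a0 a m : nat) :
  (a0 < S m)%nat -> (a < S m)%nat -> a <> a0 -> (unskip a0 a < m)%nat.
Proof. unfold unskip. destruct (Nat.ltb_spec a a0); lia. Qed.

Lemma rsum_skip (F : nat -> R) (m a0 : nat) : (a0 <= m)%nat ->
  rsum (S m) F = F a0 + rsum m (fun a => F (skip a0 a)).
Proof.
  induction m as [|m IH]; intros Ha0.
  - replace a0 with 0%nat by lia. simpl. ring.
  - change (rsum (S (S m)) F) with (rsum (S m) F + F (S m)).
    destruct (Nat.eq_dec a0 (S m)) as [->|Hne].
    + rewrite (rsum_ext (S m) (fun a => F (skip (S m) a)) F); [ring|].
      intros a Ha. unfold skip. destruct (Nat.ltb_spec a (S m)); [reflexivity|lia].
    + rewrite IH by lia. simpl.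
      replace (skip a0 m) with (S m) by (unfold skip; destruct (Nat.ltb_spec m a0); lia).
      ring.
Qed.

Lemma kernel_nontrivial (N : nat) : forall (m : nat) (M : nat -> nat -> R), (N < m)%nat ->
  exists c, (exists a, (a < m)%nat /\ c a <> 0) /\
    forall i, (i < N)%nat -> rsum m (fun a => c a * M i a) = 0.
Proof.
  induction N as [|N IH]; intros m M Hm.
  - exists (fun _ => 1). split; [exists 0%nat; split; [lia|lra]|]. intros; lia.
  - destruct (classic (exists a0, (a0 < m)%nat /\ M N a0 <> 0)) as [[a0 [Ha0 Hp]]|Hzero].
    2:{ destruct (IH m M ltac:(lia)) as [c [Hc Hker]]. exists c. split; [exact Hc|].
        intros i Hi. destruct (Nat.eq_dec i N) as [->|]; [|apply Hker; lia].
        rewrite <- (rsum_zero m). apply rsum_ext. intros a Ha.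
        destruct (Req_dec (M N a) 0) as [E|E]; [rewrite E; ring|exfalso; eauto]. }
    (* Gaussian elimination of column a0 with pivot M N a0. *)
    destruct m as [|m]; [lia|].
    destruct (IH m (fun i a => M i (skip a0 a) - M N (skip a0 a) / M N a0 * M i a0)
                ltac:(lia)) as [c2 [[a1 [Ha1 Hc2]] Hker]].
    set (S0 := rsum m (fun a => c2 a * M N (skip a0 a))).
    set (c := fun a => if Nat.eq_dec a a0 then - S0 / M N a0 else c2 (unskip a0 a)).
    assert (Hc_skip : forall a, c (skip a0 a) = c2 a).
    { intros a. unfold c. destruct (Nat.eq_dec (skip a0 a) a0) as [E|_].
      - exfalso. exact (skip_neq a0 a E).
      - now rewrite unskip_skip. }
    assert (Hc_a0 : c a0 = - S0 / M N a0) by (unfold c; destruct (Nat.eq_dec a0 a0); congruence).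
    exists c. split.
    + exists (skip a0 a1). split; [now apply skip_lt|]. now rewrite Hc_skip.
    + intros i Hi.
      rewrite (rsum_skip _ m a0), Hc_a0 by lia.
      rewrite (rsum_ext m _ (fun a => c2 a * M i (skip a0 a))) by (intros; now rewrite Hc_skip).
      destruct (Nat.eq_dec i N) as [->|Hne].
      * fold S0. field. exact Hp.
      * specialize (Hker i ltac:(lia)).
        rewrite (rsum_ext m _ (fun a => c2 a * M i (skip a0 a)
                   + (- (M i a0 / M N a0)) * (c2 a * M N (skip a0 a)))) in Hker
          by (intros; field; exact Hp).
        rewrite rsum_plus, rsum_scal in Hker. fold S0 in Hker.
        replace (rsum m (fun a => c2 a * M i (skip a0 a))) with (M i a0 / M N a0 * S0) by lra.
        field. exact Hp.
Qed.

Lemma orth_kernel_nontrivial (N m : nat) (M : nat -> nat -> R) (d : nat -> R) :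
  (N <= m)%nat -> (exists i0, (i0 < N)%nat /\ d i0 <> 0) ->
  (forall a, (a < m)%nat -> rsum N (fun i => d i * M i a) = 0) ->
  exists c, (exists a, (a < m)%nat /\ c a <> 0) /\
    forall i, (i < N)%nat -> rsum m (fun a => c a * M i a) = 0.
Proof.
  intros Hm [i0 [Hi0 Hd]] Horth.
  destruct N as [|N]; [lia|].
  destruct (kernel_nontrivial N m (fun i a => M (skip i0 i) a) ltac:(lia)) as [c [Hc Hker]].
  exists c. split; [exact Hc|].
  assert (Hrows : forall i, (i < S N)%nat -> i <> i0 -> rsum m (fun a => c a * M i a) = 0).
  { intros i Hi Hne. rewrite <- (skip_unskip i0 i Hne). apply Hker. now apply unskip_lt. }
  (* c also kills row i0, because d is orthogonal to every column of M *)
  assert (Hsum : rsum (S N) (fun i => d i * rsum m (fun a => c a * M i a)) = 0).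
  { transitivity (rsum (S N) (fun i => rsum m (fun a => c a * (d i * M i a)))).
    { apply rsum_ext. intros i _. rewrite <- rsum_scal. apply rsum_ext. intros; ring. }
    rewrite <- (rsum_swap m (S N) (fun i a => c a * (d i * M i a))), <- (rsum_zero m).
    apply rsum_ext. intros a Ha. rewrite rsum_scal, Horth by exact Ha. ring. }
  rewrite (rsum_update (S N) i0 (fun _ => 0)), rsum_zero in Hsum; [|exact Hi0|].
  2:{ intros i Hi Hne. rewrite Hrows by assumption. ring. }
  intros i Hi. destruct (Nat.eq_dec i i0) as [->|Hne]; [|now apply Hrows].
  cbv beta in Hsum.
  destruct (Rmult_integral (d i0) (rsum m (fun a => c a * M i0 a)) ltac:(lra));
    [contradiction|assumption].
Qed.

Lemma has_rank_full_cols_indep (A : nat -> nat -> R) (p q : nat) (c : nat -> R) :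
  has_rank A p q q -> (forall i, (i < p)%nat -> rsum q (fun j => c j * A i j) = 0) ->
  forall j, (j < q)%nat -> c j = 0.
Proof.
  intros [[cs [Hnodup [Hbound [Hlen Hindep]]]] _] Hker j Hj.
  assert (Hperm : Permutation cs (seq 0 q)).
  { apply NoDup_Permutation_bis; [exact Hnodup|rewrite length_seq; lia|].
    intros x Hx. apply in_seq. specialize (Hbound x Hx). lia. }
  apply Hindep.
  - intros i Hi. rewrite (lsum_perm _ _ _ Hperm), lsum_seq. now apply Hker.
  - apply (Permutation_in _ (Permutation_sym Hperm)), in_seq. lia.
Qed.

(** * Non-degenerate local minima *)

Definition unit_param (p : pidx) : params := fun q => if pidx_eq_dec q p then 1 else 0.

Lemma upd_vshift (th : params) (p : pidx) (t : R) :
  upd th p t = vshift th (t - th p) (unit_param p).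
Proof.
  extensionality q. unfold upd, vshift, unit_param.
  destruct (pidx_eq_dec q p) as [->|]; ring.
Qed.

Lemma gradient_dd1 (ps : list pidx) (F : params -> R) G D1 D2 :
  is_gradient ps F G -> dir_derivs2 F D1 D2 ->
  forall th p, In p ps -> G p th = D1 th (unit_param p).
Proof.
  intros HG HS th p Hp. eapply uniqueness_limite; [apply (HG th p Hp)|].
  eapply derivable_pt_lim_ext; [|apply (dd1_at F D1 D2 HS th (unit_param p) (th p))].
  intros t. cbv beta. now rewrite upd_vshift.
Qed.

Lemma hessian_dd2 (ps : list pidx) (F : params -> R) G D1 D2 th H :
  is_gradient ps F G -> dir_derivs2 F D1 D2 -> is_hessian_at ps G th H ->
  forall p q, In p ps -> In q ps -> H p q = D2 th (unit_param p) (unit_param q).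
Proof.
  intros HG HS HH p q Hp Hq. eapply uniqueness_limite; [apply (HH p q Hp Hq)|].
  eapply derivable_pt_lim_ext;
    [|apply (dd2_at F D1 D2 HS th (unit_param p) (unit_param q) (th q))].
  intros t. cbv beta. now rewrite (gradient_dd1 ps F G D1 D2 HG HS _ p Hp), upd_vshift.
Qed.

Lemma local_min_along_all (ps : list pidx) (F : params -> R) (th : params) :
  local_min ps F th -> forall u, local_min_along F th u.
Proof.
  intros [eps [Heps Hmin]] u. set (S := lsum (fun p => Rabs (u p)) ps).
  assert (HS : 0 <= S).
  { unfold S, lsum. clear. induction ps as [|a ps IH]; simpl; [lra|].
    pose proof (Rabs_pos (u a)). lra. }
  exists (eps / (S + 1)). split; [apply Rdiv_lt_0_compat; lra|].
  intros t Ht. apply Hmin. intros p Hp. unfold vshift.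
  replace (th p + t * u p - th p) with (t * u p) by ring. rewrite Rabs_mult.
  assert (Hu : Rabs (u p) <= S).
  { apply (lsum_nonneg_le (fun p => Rabs (u p))); [intros; apply Rabs_pos|exact Hp]. }
  assert (Ht' : Rabs t * (S + 1) < eps).
  { apply (Rmult_lt_compat_r (S + 1)) in Ht; [|lra].
    now replace (eps / (S + 1) * (S + 1)) with eps in Ht by (field; lra). }
  pose proof (Rabs_pos t). pose proof (Rabs_pos (u p)). nra.
Qed.

Lemma lsum_unit_param (v : pidx -> R) (ps : list pidx) (r : pidx) :
  lsum (fun q => v q * unit_param q r) ps = v r * INR (count_occ pidx_eq_dec ps r).
Proof.
  induction ps as [|a ps IH]; unfold lsum in *; simpl; [ring|]. rewrite IH. unfold unit_param.
  destruct (pidx_eq_dec r a) as [->|Hne]; destruct (pidx_eq_dec a _); try congruence.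
  - rewrite S_INR. ring.
  - ring.
Qed.

(* The Hessian is positive semidefinite at a local minimum, so it annihilates every direction
   along which F is constant; non-singularity then forces such a direction to vanish. *)
Lemma nondeg_local_min_no_flat_dir (ps : list pidx) (F : params -> R) (th w : params) :
  nondeg_local_min ps F th -> smooth2 F ->
  (forall q, w q <> 0 -> In q ps) -> (forall t, F (vshift th t w) = F th) ->
  forall q, w q = 0.
Proof.
  intros [Hloc [G [H [HG [HH Hnonsing]]]]] [D1 [D2 HS]] Hsupp Hconst.
  assert (Hcross : forall p, D2 th (unit_param p) w = 0).
  { intros p. apply (dd2_cross_zero F D1 D2 HS).
    - intros u. apply (dd2_nonneg_at_min F D1 D2 HS), (local_min_along_all ps), Hloc.
    - now apply (dd2_zero_of_const F D1 D2 HS). }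
  (* [ps] may list a coordinate several times *)
  set (v := fun q => w q / INR (count_occ pidx_eq_dec ps q)).
  assert (Hcount : forall q, w q <> 0 -> INR (count_occ pidx_eq_dec ps q) <> 0).
  { intros q Hq. apply not_0_INR. pose proof (proj1 (count_occ_In pidx_eq_dec ps q) (Hsupp q Hq)).
    lia. }
  assert (Hv : (fun r => lsum (fun q => v q * unit_param q r) ps) = w).
  { extensionality r. rewrite lsum_unit_param. unfold v.
    destruct (Req_dec (w r) 0) as [E|E]; [rewrite E; unfold Rdiv; ring|].
    field. now apply Hcount. }
  assert (Hker : forall p, In p ps -> lsum (fun q => H p q * v q) ps = 0).
  { intros p Hp.
    rewrite (lsum_ext _ (fun q => D2 th (unit_param p) (unit_param q) * v q))
      by (intros q Hq; now rewrite (hessian_dd2 ps F G D1 D2 th H HG HS HH p q Hp Hq)).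
    now rewrite (dd2_lsum F D1 D2 HS), Hv. }
  intros q. destruct (Req_dec (w q) 0) as [|Hq]; [assumption|].
  pose proof (Hnonsing v Hker q (Hsupp q Hq)) as Hvq. unfold v in Hvq.
  replace (w q) with (w q / INR (count_occ pidx_eq_dec ps q) * INR (count_occ pidx_eq_dec ps q))
    by (field; now apply Hcount).
  rewrite Hvq. ring.
Qed.

(** * The network *)

Lemma in_pidxs_W (n : nat -> nat) (L K a j : nat) :
  (1 <= K <= L)%nat -> (a < n (K - 1))%nat -> (j < n K)%nat -> In (IW K a j) (pidxs n L).
Proof.
  intros HK Ha Hj. unfold pidxs. apply in_flat_map. exists K. split; [apply in_seq; lia|].
  apply in_app_iff. left. apply in_flat_map. exists a. split; [apply in_seq; lia|].
  apply in_map_iff. exists j. split; [reflexivity|apply in_seq; lia].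
Qed.

Lemma in_pidxs_B (n : nat -> nat) (L K j : nat) :
  (1 <= K <= L)%nat -> (j < n K)%nat -> In (IB K j) (pidxs n L).
Proof.
  intros HK Hj. unfold pidxs. apply in_flat_map. exists K. split; [apply in_seq; lia|].
  apply in_app_iff. right. apply in_map_iff. exists j. split; [reflexivity|apply in_seq; lia].
Qed.

(* Moves column j of (W_K, b_K) by c; c p is the entry for the bias, p being the width of
   layer K-1. *)
Definition column_dir (K j p : nat) (c : nat -> R) : params := fun q =>
  match q with
  | IW m a b => if (Nat.eqb m K && Nat.eqb b j && Nat.ltb a p)%bool then c a else 0
  | IB m b => if (Nat.eqb m K && Nat.eqb b j)%bool then c p else 0
  end.

Lemma column_dir_other_layer (K j p : nat) (c : nat -> R) (th : params) (t : R) (m a b : nat) :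
  m <> K ->
  vshift th t (column_dir K j p c) (IW m a b) = th (IW m a b) /\
  vshift th t (column_dir K j p c) (IB m b) = th (IB m b).
Proof.
  intros Hm. unfold vshift, column_dir. rewrite (proj2 (Nat.eqb_neq m K) Hm). cbn [andb].
  split; ring.
Qed.

Section Network.
Variables (sigma sigma1 sigma2 l l1 l2 : R -> R) (n : nat -> nat).
Hypothesis Hsigma1 : forall x, derivable_pt_lim sigma x (sigma1 x).
Hypothesis Hsigma2 : forall x, derivable_pt_lim sigma1 x (sigma2 x).
Hypothesis Hl1 : forall x, derivable_pt_lim l x (l1 x).
Hypothesis Hl2 : forall x, derivable_pt_lim l1 x (l2 x).

(* [preact th m x] is the pre-activation g_{m+1}(x), so that f_{m+1} = sigma o g_{m+1}. *)
Definition preact (th : params) (m : nat) (x : nat -> R) (j : nat) : R :=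
  rsum (n m) (fun a => th (IW (S m) a j) * fk sigma n th m x a) + th (IB (S m) j).

Definition next_preact (th : params) (m : nat) (z : nat -> R) (j : nat) : R :=
  rsum (n (S m)) (fun a => th (IW (S (S m)) a j) * sigma (z a)) + th (IB (S (S m)) j).

(* [fwd th m r z] is f_{m+1+r} as a function of the pre-activation z of layer m+1. *)
Fixpoint fwd (th : params) (m r : nat) (z : nat -> R) : nat -> R :=
  match r with
  | O => fun j => sigma (z j)
  | S r' => fwd th (S m) r' (next_preact th m z)
  end.

Definition loss_from (th : params) (m r : nat) (z y : nat -> R) : R :=
  rsum (n (S m + r)) (fun j => l (fwd th m r z j - y j)).

(* the rows [f_m(x), 1] of the augmented output matrix of layer m *)
Definition aug_out (th : params) (m : nat) (x : nat -> R) (a : nat) : R :=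
  if Nat.ltb a (n m) then fk sigma n th m x a else 1.

Lemma fk_fwd (th : params) (m r : nat) (x : nat -> R) :
  fk sigma n th (S m + r) x = fwd th m r (preact th m x).
Proof.
  revert m. induction r as [|r IH]; intros m.
  - now rewrite Nat.add_0_r.
  - rewrite Nat.add_succ_r. exact (IH (S m)).
Qed.

Lemma Phi_loss_from (k r N : nat) (X Y : nat -> nat -> R) (th : params) :
  Phi sigma l n (S k + r) N X Y th = rsum N (fun i => loss_from th k r (preact th k (X i)) (Y i)).
Proof. unfold Phi, loss_from. apply rsum_ext. intros i _. now rewrite fk_fwd. Qed.

Lemma fk_local (th th' : params) (m : nat) (x : nat -> R) :
  (forall m' a j, (m' <= m)%nat ->
     th (IW m' a j) = th' (IW m' a j) /\ th (IB m' j) = th' (IB m' j)) ->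
  fk sigma n th m x = fk sigma n th' m x.
Proof.
  induction m as [|m IH]; intros H; [reflexivity|]. extensionality j. simpl.
  rewrite IH by (intros; apply H; lia).
  destruct (H (S m) 0%nat j (le_n _)) as [_ ->]. do 2 f_equal.
  apply rsum_ext. intros a _. now rewrite (proj1 (H (S m) a j (le_n _))).
Qed.

Lemma fwd_local (th th' : params) (m r : nat) (z : nat -> R) :
  (forall m' a j, (S m < m')%nat ->
     th (IW m' a j) = th' (IW m' a j) /\ th (IB m' j) = th' (IB m' j)) ->
  fwd th m r z = fwd th' m r z.
Proof.
  revert m z. induction r as [|r IH]; intros m z H; [reflexivity|]. simpl.
  replace (next_preact th' m z) with (next_preact th m z).
  - apply IH. intros; apply H; lia.
  - extensionality j. unfold next_preact.
    destruct (H (S (S m)) 0%nat j ltac:(lia)) as [_ ->]. f_equal.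
    apply rsum_ext. intros a _. now rewrite (proj1 (H (S (S m)) a j ltac:(lia))).
Qed.

Lemma fwd_ext (th : params) (m r : nat) (z z' : nat -> R) :
  (forall a, (a < n (S m))%nat -> z a = z' a) ->
  forall j, (j < n (S m + r))%nat -> fwd th m r z j = fwd th m r z' j.
Proof.
  intros Hz j Hj. destruct r as [|r]; simpl.
  - rewrite Nat.add_0_r in Hj. now rewrite Hz.
  - f_equal. extensionality b. unfold next_preact. f_equal.
    apply rsum_ext. intros a Ha. now rewrite Hz.
Qed.

Lemma loss_from_ext (th : params) (m r : nat) (z z' y : nat -> R) :
  (forall a, (a < n (S m))%nat -> z a = z' a) -> loss_from th m r z y = loss_from th m r z' y.
Proof.
  intros Hz. unfold loss_from. apply rsum_ext. intros j Hj.
  now rewrite (fwd_ext th m r z z' Hz j Hj).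
Qed.

Lemma loss_from_succ (th : params) (m r : nat) (z y : nat -> R) :
  loss_from th m (S r) z y = loss_from th (S m) r (next_preact th m z) y.
Proof. unfold loss_from. now rewrite Nat.add_succ_r. Qed.

Lemma preact_along_column (th : params) (m j : nat) (c : nat -> R) (x : nat -> R) (t : R) :
  preact (vshift th t (column_dir (S m) j (n m) c)) m x =
  vshift (preact th m x) t
    (fun b => rsum (S (n m)) (fun a => c a * aug_out th m x a) * unit_vec j b).
Proof.
  set (f := fk sigma n th m x).
  assert (Hfk : fk sigma n (vshift th t (column_dir (S m) j (n m) c)) m x = f).
  { apply fk_local. intros m' a b Hm'. apply column_dir_other_layer. lia. }
  extensionality b. unfold preact. rewrite Hfk. fold f.
  unfold vshift, column_dir, unit_vec, aug_out. fold f. rewrite Nat.eqb_refl.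
  destruct (Nat.eq_dec b j) as [->|Hne].
  - rewrite Nat.eqb_refl. cbn [andb rsum]. rewrite Nat.ltb_irrefl.
    rewrite (rsum_ext (n m) (fun a => (th (IW (S m) a j) + t * (if a <? n m then c a else 0)) * f a)
               (fun a => th (IW (S m) a j) * f a + t * (c a * f a)))
      by (intros a Ha; rewrite (proj2 (Nat.ltb_lt _ _) Ha); ring).
    rewrite (rsum_ext (n m) (fun a => c a * (if a <? n m then f a else 1)) (fun a => c a * f a))
      by (intros a Ha; now rewrite (proj2 (Nat.ltb_lt _ _) Ha)).
    rewrite rsum_plus, rsum_scal. ring.
  - rewrite (proj2 (Nat.eqb_neq b j) Hne). cbn [andb].
    rewrite (rsum_ext (n m) (fun a => (th (IW (S m) a b) + t * 0) * f a)
               (fun a => th (IW (S m) a b) * f a)) by (intros; ring).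
    ring.
Qed.

Lemma Phi_along_column (k r N : nat) (X Y : nat -> nat -> R) (th : params) (j : nat)
    (c : nat -> R) (t : R) :
  Phi sigma l n (S k + r) N X Y (vshift th t (column_dir (S k) j (n k) c)) =
  rsum N (fun i => loss_from th k r
    (vshift (preact th k (X i)) t
       (fun b => rsum (S (n k)) (fun a => c a * aug_out th k (X i) a) * unit_vec j b)) (Y i)).
Proof.
  rewrite Phi_loss_from. apply rsum_ext. intros i _.
  rewrite preact_along_column. unfold loss_from.
  rewrite (fwd_local (vshift th t (column_dir (S k) j (n k) c)) th); [reflexivity|].
  intros m' a b Hm'. apply column_dir_other_layer. lia.
Qed.

Lemma smooth2_fk (m : nat) (x : nat -> R) (j : nat) :
  smooth2 (fun th : params => fk sigma n th m x j).
Proof.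
  revert j. induction m as [|m IH]; intros j; simpl.
  - apply smooth2_const.
  - apply (smooth2_comp sigma sigma1 sigma2); [exact Hsigma1|exact Hsigma2|].
    apply smooth2_plus; [|apply smooth2_coord].
    apply smooth2_rsum. intros a. apply smooth2_mult; [apply smooth2_coord|apply IH].
Qed.

Lemma smooth2_Phi (L N : nat) (X Y : nat -> nat -> R) : smooth2 (Phi sigma l n L N X Y).
Proof.
  unfold Phi. apply smooth2_rsum. intros i. apply smooth2_rsum. intros j.
  apply (smooth2_comp l l1 l2); [exact Hl1|exact Hl2|].
  unfold Rminus. apply smooth2_plus; [apply smooth2_fk|apply smooth2_const].
Qed.

Lemma smooth2_fwd (th : params) (r : nat) : forall (m : nat) (G : nat -> (nat -> R) -> R),
  (forall a, smooth2 (G a)) -> forall j, smooth2 (fun z => fwd th m r (fun a => G a z) j).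
Proof.
  induction r as [|r IH]; intros m G HG j; simpl.
  - apply (smooth2_comp sigma sigma1 sigma2); [exact Hsigma1|exact Hsigma2|apply HG].
  - refine (IH (S m) (fun b z => next_preact th m (fun a => G a z) b) _ j). intros b.
    unfold next_preact. apply smooth2_plus; [|apply smooth2_const].
    apply smooth2_rsum. intros a. apply smooth2_mult; [apply smooth2_const|].
    apply (smooth2_comp sigma sigma1 sigma2); [exact Hsigma1|exact Hsigma2|apply HG].
Qed.

Lemma smooth2_loss_from (th : params) (m r : nat) (y : nat -> R) :
  smooth2 (fun z => loss_from th m r z y).
Proof.
  unfold loss_from. apply smooth2_rsum. intros j.
  apply (smooth2_comp l l1 l2); [exact Hl1|exact Hl2|].
  unfold Rminus. apply smooth2_plus; [|apply smooth2_const].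
  exact (smooth2_fwd th r m (fun a z => z a) (fun a => smooth2_coord a) j).
Qed.

Definition dloss (th : params) (m r : nat) (y : nat -> R) : (nat -> R) -> (nat -> R) -> R :=
  projT1 (smooth2_loss_from th m r y).

Lemma dloss_spec (th : params) (m r : nat) (y : nat -> R) :
  exists D2, dir_derivs2 (fun z => loss_from th m r z y) (dloss th m r y) D2.
Proof. unfold dloss. destruct (smooth2_loss_from th m r y) as [D1 [D2 HS]]. now exists D2. Qed.

Hypothesis Hsigma1_pos : forall x, 0 < sigma1 x.

Definition stationary (F : (nat -> R) -> R) (z : nat -> R) (p : nat) : Prop :=
  forall j, (j < p)%nat -> derivable_pt_lim (fun t => F (vshift z t (unit_vec j))) 0 0.

Definition full_col_rank (th : params) (m : nat) : Prop :=
  has_rank (Wmat th m) (n (m - 1)) (n m) (n m).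

Lemma sigma_shift_deriv (a : R) :
  derivable_pt_lim (fun t => sigma (a + t) - sigma a) 0 (sigma1 a).
Proof.
  eapply derivable_pt_lim_val.
  - apply derivable_pt_lim_minus; [|apply derivable_pt_lim_const].
    apply (proj1 (derivable_pt_lim_at_0 _ _ _)), Hsigma1.
  - ring.
Qed.

Lemma stationary_output (th : params) (m : nat) (z y : nat -> R) :
  stationary (fun z => loss_from th m 0 z y) z (n (S m)) ->
  forall j, (j < n (S m))%nat -> l1 (sigma (z j) - y j) = 0.
Proof.
  intros Hst j Hj.
  assert (Hline : forall t, loss_from th m 0 (vshift z t (unit_vec j)) y =
    loss_from th m 0 z y - l (sigma (z j) - y j) + l (sigma (z j + t) - y j)).
  { intros t. unfold loss_from. cbn [fwd]. rewrite Nat.add_0_r.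
    rewrite (rsum_update (n (S m)) j (fun a => l (sigma (z a) - y a))); [|exact Hj|].
    - unfold vshift, unit_vec. destruct (Nat.eq_dec j j); [|congruence]. now rewrite Rmult_1_r.
    - intros a _ Ha. unfold vshift, unit_vec. destruct (Nat.eq_dec a j); [congruence|].
      now rewrite Rmult_0_r, Rplus_0_r. }
  apply (derivable_pt_lim_factor_pos _ _ (sigma1 (z j)) (Hst j Hj)); [|apply Hsigma1_pos].
  eapply derivable_pt_lim_ext; [intros t; symmetry; apply Hline|].
  eapply derivable_pt_lim_val.
  - apply derivable_pt_lim_plus; [apply derivable_pt_lim_const|].
    apply (derivable_pt_lim_comp (fun t => sigma (z j + t) - y j) l); [|apply Hl1].
    apply derivable_pt_lim_minus; [|apply derivable_pt_lim_const].
    apply (proj1 (derivable_pt_lim_at_0 _ _ _)), Hsigma1.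
  - cbv beta. rewrite Rplus_0_r. ring.
Qed.

Lemma next_preact_along_unit (th : params) (m : nat) (z : nat -> R) (j : nat) (t : R) :
  (j < n (S m))%nat ->
  next_preact th m (vshift z t (unit_vec j)) =
  vshift (next_preact th m z) (sigma (z j + t) - sigma (z j)) (fun b => th (IW (S (S m)) j b)).
Proof.
  intros Hj. extensionality b. unfold next_preact, vshift.
  rewrite (rsum_update (n (S m)) j (fun a => th (IW (S (S m)) a b) * sigma (z a))); [|exact Hj|].
  - unfold unit_vec. destruct (Nat.eq_dec j j); [|congruence]. rewrite Rmult_1_r. ring.
  - intros a _ Ha. unfold unit_vec. destruct (Nat.eq_dec a j); [congruence|].
    now rewrite Rmult_0_r, Rplus_0_r.
Qed.

Lemma stationary_next (th : params) (m r : nat) (z y : nat -> R) :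
  full_col_rank th (S (S m)) ->
  stationary (fun z => loss_from th m (S r) z y) z (n (S m)) ->
  stationary (fun z => loss_from th (S m) r z y) (next_preact th m z) (n (S (S m))).
Proof.
  intros Hrank Hst.
  destruct (dloss_spec th (S m) r y) as [D2 HS]. set (D1 := dloss th (S m) r y) in HS.
  set (z' := next_preact th m z).
  set (row := fun j b => th (IW (S (S m)) j b)).
  (* moving z_j moves z' along row j of W_{m+2}, at speed sigma'(z_j) > 0 *)
  assert (Hrow : forall j, (j < n (S m))%nat -> D1 z' (row j) = 0).
  { intros j Hj.
    apply (derivable_pt_lim_factor_pos _ _ (sigma1 (z j)) (Hst j Hj)); [|apply Hsigma1_pos].
    assert (Hg0 : sigma (z j + 0) - sigma (z j) = 0) by (rewrite Rplus_0_r; ring).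
    pose proof (dd1_chain _ D1 D2 HS z' (row j) _ _ (sigma_shift_deriv (z j)) Hg0) as Hd.
    eapply derivable_pt_lim_ext; [|exact Hd].
    intros t. cbv beta. now rewrite loss_from_succ, next_preact_along_unit by exact Hj. }
  assert (Hcols : forall j, (j < n (S m))%nat ->
    rsum (n (S (S m))) (fun b => D1 z' (unit_vec b) * Wmat th (S (S m)) j b) = 0).
  { intros j Hj. rewrite <- (Hrow j Hj).
    transitivity (D1 z' (fun a => rsum (n (S (S m))) (fun b => row j b * unit_vec b a))).
    - rewrite (dd1_rsum _ D1 D2 HS). apply rsum_ext. intros b _. unfold Wmat, row. ring.
    - eapply uniqueness_limite; [apply HS|].
      eapply derivable_pt_lim_ext; [|apply HS]. intros t. cbv beta.
      apply loss_from_ext. intros a Ha. unfold vshift. do 2 f_equal.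
      rewrite (rsum_ext _ _ (fun b => unit_vec a b * row j b))
        by (intros; rewrite unit_vec_sym; ring).
      now rewrite rsum_unit_vec. }
  intros b Hb. eapply derivable_pt_lim_val; [apply HS|].
  exact (has_rank_full_cols_indep _ _ _ (fun b => D1 z' (unit_vec b)) Hrank Hcols b Hb).
Qed.

Lemma stationary_propagate (r : nat) : forall (th : params) (m : nat) (z y : nat -> R),
  (forall m', (S (S m) <= m' <= S m + r)%nat -> full_col_rank th m') ->
  stationary (fun z => loss_from th m r z y) z (n (S m)) ->
  forall j, (j < n (S m + r))%nat -> l1 (fwd th m r z j - y j) = 0.
Proof.
  induction r as [|r IH]; intros th m z y Hrank Hst j Hj.
  - rewrite Nat.add_0_r in Hj. exact (stationary_output th m z y Hst j Hj).
  - rewrite Nat.add_succ_r in Hj.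
    apply (IH th (S m) (next_preact th m z) y); [| |exact Hj].
    + intros m' Hm'. apply Hrank. lia.
    + apply stationary_next; [apply Hrank; lia|exact Hst].
Qed.

Section NondegenerateMinimum.
Variables (N k r : nat) (X Y : nat -> nat -> R) (th : params).
Hypothesis HN : (N <= S (n k))%nat.
Hypothesis Hmin : nondeg_local_min (pidxs n (S k + r)) (Phi sigma l n (S k + r) N X Y) th.

Let delta (i j : nat) : R := dloss th k r (Y i) (preact th k (X i)) (unit_vec j).

Lemma column_dir_deriv_zero (j : nat) (c : nat -> R) :
  rsum N (fun i => rsum (S (n k)) (fun a => c a * aug_out th k (X i) a) * delta i j) = 0.
Proof.
  destruct Hmin as [Hloc _].
  destruct (local_min_along_all _ _ _ Hloc (column_dir (S k) j (n k) c)) as [eps [Heps Hm]].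
  apply (local_min_deriv_zero
           (fun t => Phi sigma l n (S k + r) N X Y (vshift th t (column_dir (S k) j (n k) c))) eps);
    [exact Heps| |].
  - intros t Ht. rewrite vshift0. now apply Hm.
  - eapply derivable_pt_lim_ext; [intros t; symmetry; apply Phi_along_column|].
    apply derivable_pt_lim_rsum. intros i _.
    destruct (dloss_spec th k r (Y i)) as [D2 HS].
    eapply derivable_pt_lim_val; [apply (dd1_spec _ _ _ HS)|].
    apply (dd1_scale _ _ _ HS).
Qed.

Lemma delta_zero (j : nat) : (j < n (S k))%nat -> forall i, (i < N)%nat -> delta i j = 0.
Proof.
  intros Hj. destruct (classic (exists i0, (i0 < N)%nat /\ delta i0 j <> 0)) as [Hex|Hall].
  2:{ intros i Hi. apply NNPP. eauto. }
  exfalso.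
  destruct (orth_kernel_nontrivial N (S (n k)) (fun i a => aug_out th k (X i) a)
              (fun i => delta i j) HN Hex) as [c [[a0 [Ha0 Hc0]] Hker]].
  { intros a Ha. rewrite <- (column_dir_deriv_zero j (unit_vec a)).
    apply rsum_ext. intros i _. rewrite rsum_unit_vec by exact Ha. ring. }
  cbv beta in Hker.
  set (w := column_dir (S k) j (n k) c).
  assert (Hflat : forall t, Phi sigma l n (S k + r) N X Y (vshift th t w) =
                            Phi sigma l n (S k + r) N X Y th).
  { intros t. unfold w. rewrite Phi_along_column, Phi_loss_from.
    apply rsum_ext. intros i Hi. rewrite (Hker i Hi).
    f_equal. extensionality b. unfold vshift. ring. }
  assert (Hsupp : forall q, w q <> 0 -> In q (pidxs n (S k + r))).
  { intros [m a b|m b] Hq; unfold w, column_dir in Hq.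
    - destruct (Nat.eqb_spec m (S k)), (Nat.eqb_spec b j), (Nat.ltb_spec a (n k));
        cbn [andb] in Hq; try congruence.
      subst. apply in_pidxs_W; [lia|now replace (S k - 1)%nat with k by lia|exact Hj].
    - destruct (Nat.eqb_spec m (S k)), (Nat.eqb_spec b j); cbn [andb] in Hq; try congruence.
      subst. apply in_pidxs_B; [lia|exact Hj]. }
  pose proof (nondeg_local_min_no_flat_dir _ _ th w Hmin (smooth2_Phi _ _ _ _) Hsupp Hflat) as Hw.
  apply Hc0. destruct (Nat.ltb_spec a0 (n k)) as [Hlt|Hge].
  - specialize (Hw (IW (S k) a0 j)). unfold w, column_dir in Hw.
    now rewrite !Nat.eqb_refl, (proj2 (Nat.ltb_lt _ _) Hlt) in Hw.
  - specialize (Hw (IB (S k) j)). unfold w, column_dir in Hw. rewrite !Nat.eqb_refl in Hw.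
    now replace a0 with (n k) by lia.
Qed.

Lemma nondeg_local_min_global_min :
  (forall a, derivable_pt_lim l a 0 -> forall t, l a <= l t) ->
  (forall m', (S (S k) <= m' <= S k + r)%nat -> full_col_rank th m') ->
  global_min (Phi sigma l n (S k + r) N X Y) th.
Proof.
  intros Hl_min Hrank th'. unfold Phi. apply rsum_le. intros i Hi. apply rsum_le. intros j Hj.
  apply Hl_min. rewrite fk_fwd. eapply derivable_pt_lim_val; [apply Hl1|].
  apply (stationary_propagate r th k _ (Y i) Hrank); [|exact Hj].
  intros j' Hj'. destruct (dloss_spec th k r (Y i)) as [D2 HS].
  eapply derivable_pt_lim_val; [apply (dd1_spec _ _ _ HS)|]. now apply delta_zero.
Qed.

End NondegenerateMinimum.
End Network.

Theorem mainTheorem6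
  (sigma l : R -> R) (L N : nat) (n : nat -> nat)
  (X Y : nat -> nat -> R)
  (hX : distinct_data N (n 0%nat) X)
  (hsigma : sigma_assumption sigma)
  (hl : loss_assumption l)
  (hattained : exists th0 : params, global_min (Phi sigma l n L N X Y) th0)
  (k : nat) (hk : (1 <= k <= L - 1)%nat) (hnk : (N - 1 <= n k)%nat)
  (thstar : params)
  (hmin : nondeg_local_min (pidxs n L) (Phi sigma l n L N X Y) thstar)
  (hrank : forall l0, (k + 2 <= l0 <= L)%nat ->
             has_rank (Wmat thstar l0) (n (l0 - 1)%nat) (n l0) (n l0)) :
  global_min (Phi sigma l n L N X Y) thstar.
Proof.
  destruct hsigma as [Hanalytic [Hderiv _]].
  destruct hl as [[l1 [l2 [Hl1 [Hl2 _]]]] Hl_min].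
  destruct (choice _ Hderiv) as [sigma1 Hsigma1].
  destruct (choice _ (real_analytic_deriv_derivable sigma sigma1 Hanalytic
                        (fun t => proj1 (Hsigma1 t)))) as [sigma2 Hsigma2].
  set (r := (L - S k)%nat).
  assert (HL : L = (S k + r)%nat) by (unfold r; lia).
  clearbody r. subst L.
  apply (nondeg_local_min_global_min sigma sigma1 sigma2 l l1 l2 n
           (fun t => proj1 (Hsigma1 t)) Hsigma2 Hl1 Hl2 (fun t => proj2 (Hsigma1 t)));
    [lia|exact hmin|exact Hl_min|].
  intros m' Hm'. apply hrank. lia.
Qed.
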